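(* In the setting described in the context, if $\psi\in\mathrm{opt}(\mathcal{O},R)$ and $x\in R^\times$, then $x\psi x^{-1}\in\mathrm{opt}(\mathcal{O},R)$; that is, conjugation by $\overline{R}^\times=R^\times/\mathbb{Z}[1/p]^\times$ preserves oriented optimal embeddings.
   Context: Let $p$ be a prime and $B$ a quaternion algebra over $\mathbb{Q}$ split at $p$. Let $N^-$ be the product of the finite primes where $B$ ramifies and $N^+$ a positive integer coprime to $N^-p$. Let $R$ be an Eichler $\mathbb{Z}[1/p]$-order of level $N^+$ in $B$. For a prime $\ell\nmid N^-$, identify $B_\ell=B\otimes\mathbb{Q}_\ell\cong M_2(\mathbb{Q}_\ell)$ and let $\mathcal{T}_\ell$ be the Bruhat–Tits tree; maximal orders of $B_\ell$ correspond to vertices ($[\Lambda]\mapsto\mathrm{End}(\Lambda)$), with $B_\ell^\times/\mathbb{Q}_\ell^\times$ acting by conjugation, and $R_\ell$ corresponds to the path $\eta_{R_\ell}$ of length $v_\ell(N^+)$ joining the vertices of the two maximal orders whose intersection is $R_\ell$. Let $K$ be a quadratic field and $\mathcal{O}=\mathcal{O}_d[1/p]$, $\mathcal{O}_d=\mathbb{Z}[\frac{d+\sqrt d}{2}]$, with $p^2\nmid d$, $(d,N^-)=1$, and $\ell\nmid d$ whenever $\ell^2\mid N^+$. An optimal embedding is a $\mathbb{Q}$-algebra embedding $\psi\colon K\to B$ with $\psi(K)\cap R=\psi(\mathcal{O})$; for $\ell\mid N^+$, $\psi(K_\ell)^\times$ fixes exactly two ends of $\mathcal{T}_\ell$ and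 $\mathcal{G}_\psi$ is the geodesic joining them. Fixed orientation data: for $\ell\mid N^-$, ring morphisms $\nu_\ell\colon R_\ell\to\mathbb{F}_{\ell^2}$, $\mu_\ell\colon\mathcal{O}_\ell\to\mathbb{F}_{\ell^2}$; for $\ell\mid N^+$, a maximal order $S_\ell\supseteq R_\ell$, i.e. an endpoint $v_{S_\ell}$ of $\eta_{R_\ell}$; for $\ell\mid N^+$, $\ell\nmid d$, an isomorphism $\mu_\ell\colon K_\ell^\times/\mathcal{O}_\ell^\times\mathbb{Q}_\ell^\times\to\mathbb{Z}$. An optimal $\psi$ is oriented if: for $\ell\mid N^-$, $\nu_\ell\circ\psi=\mu_\ell$ on $\mathcal{O}_\ell$; for $\ell\mid N^+$, $\ell\nmid d$ (then $\eta_{R_\ell}\subset\mathcal{G}_\psi$), the endpoints of $\eta_{R_\ell}$ are $v_{S_\ell}$ and $T_\psi^{v_\ell(N^+)}(v_{S_\ell})$, where $T_\psi=\psi(\text{an element of }\mu_\ell^{-1}(1))$ acts on $\mathcal{G}_\psi$ as a translation; for $\ell\mid N^+$, $\ell\mid d$ (then $\eta_{R_\ell}$ is an edge not contained in $\mathcal{G}_\psi$), $v_{S_\ell}$ is the endpoint of $\eta_{R_\ell}$ farther from $\mathcal{G}_\psi$. $\mathrm{opt}(\mathcal{O},R)$ denotes the set of oriented optimal embeddings. *)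

From HB Require Import structures.
From mathcomp Require Import all_boot all_order all_algebra.
Unset Printing Implicit Defensive.
Import Order.TTheory GRing.Theory Num.Theory.
Local Open Scope ring_scope.

(* i^2 = a, j^2 = b, k = ij = -ji. *)
Record quat := Quat { q0 : rat; q1 : rat; q2 : rat; q3 : rat }.

Definition qadd (x y : quat) : quat :=
  Quat (q0 x + q0 y) (q1 x + q1 y) (q2 x + q2 y) (q3 x + q3 y).
Definition qscale (c : rat) (x : quat) : quat :=
  Quat (c * q0 x) (c * q1 x) (c * q2 x) (c * q3 x).
Definition qzero : quat := Quat 0 0 0 0.
Definition qone : quat := Quat 1 0 0 0.
Definition qmul (a b : rat) (x y : quat) : quat :=
  Quat (q0 x * q0 y + a * q1 x * q1 y + b * q2 x * q2 y - a * b * q3 x * q3 y)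
       (q0 x * q1 y + q1 x * q0 y - b * q2 x * q3 y + b * q3 x * q2 y)
       (q0 x * q2 y + q2 x * q0 y + a * q1 x * q3 y - a * q3 x * q1 y)
       (q0 x * q3 y + q3 x * q0 y + q1 x * q2 y - q2 x * q1 y).
Definition qnrd (a b : rat) (x : quat) : rat :=
  q0 x ^+ 2 - a * q1 x ^+ 2 - b * q2 x ^+ 2 + a * b * q3 x ^+ 2.

Definition val_ge (l : nat) (q : rat) (k : nat) : bool :=
  (q == 0) || (((l ^ k) %| `|numq q|)%N && coprime `|denq q| l).

(* B_l = B (x) Q_l has a nonzero element of reduced norm 0 (i.e. is not a
   division algebra).  Expressed without Q_l: by compactness of primitive
   vectors in Z_l^4 and density of Z^4, the norm form is isotropic over Q_l
   iff for every k there is an integer vector, primitive at l, whose reduced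
   norm has l-adic valuation >= k. *)
Definition isotropic_at (a b : rat) (l : nat) : Prop :=
  forall k : nat, exists v0 v1 v2 v3 : int,
    ~~ [&& (l%:Z %| v0)%Z, (l%:Z %| v1)%Z, (l%:Z %| v2)%Z & (l%:Z %| v3)%Z] /\
    val_ge l (qnrd a b (Quat v0%:~R v1%:~R v2%:~R v3%:~R)) k.

Definition ramified (a b : rat) (l : nat) : Prop :=
  prime l /\ ~ isotropic_at a b l.

Definition zloc (l : nat) (q : rat) : Prop := coprime `|denq q| l.
Definition zinvp (p : nat) (q : rat) : Prop := exists n : nat, (`|denq q| %| p ^ n)%N.

Definition qlin (c0 c1 c2 c3 : rat) (e0 e1 e2 e3 : quat) : quat :=
  qadd (qadd (qscale c0 e0) (qscale c1 e1)) (qadd (qscale c2 e2) (qscale c3 e3)).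

Definition qindep (e0 e1 e2 e3 : quat) : Prop :=
  forall c0 c1 c2 c3 : rat, qlin c0 c1 c2 c3 e0 e1 e2 e3 = qzero ->
    [/\ c0 = 0, c1 = 0, c2 = 0 & c3 = 0].

Definition lattice (A : rat -> Prop) (S : quat -> Prop) : Prop :=
  exists e0 e1 e2 e3 : quat, qindep e0 e1 e2 e3 /\
    forall x, S x <-> exists c0 c1 c2 c3 : rat,
      [/\ A c0, A c1, A c2 & A c3] /\ x = qlin c0 c1 c2 c3 e0 e1 e2 e3.

Definition qorder (a b : rat) (A : rat -> Prop) (S : quat -> Prop) : Prop :=
  lattice A S /\ S qone /\ (forall x y, S x -> S y -> S (qmul a b x y)).

Definition seteq (S T : quat -> Prop) : Prop := forall x, S x <-> T x.
Definition setI (S T : quat -> Prop) : quat -> Prop := fun x => S x /\ T x.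
Definition subset (S T : quat -> Prop) : Prop := forall x, S x -> T x.

(* maximal Z_(l)-orders of B: these correspond bijectively to the maximal
   orders of B_l, i.e. to the vertices of the Bruhat-Tits tree T_l *)
Definition maxorder (a b : rat) (l : nat) (S : quat -> Prop) : Prop :=
  qorder a b (zloc l) S /\
  forall S', qorder a b (zloc l) S' -> subset S S' -> seteq S' S.

Definition loc (l : nat) (R : quat -> Prop) : quat -> Prop :=
  fun x => exists s : nat, [/\ (0 < s)%N, coprime s l & R (qscale s%:R x)].

(* distance in the tree between two vertices (maximal orders):
   dist(S,S') = least m with l^m S contained in S' *)
Definition dist_le (l : nat) (S S' : quat -> Prop) (m : nat) : Prop :=
  forall x, S x -> S' (qscale (l ^ m)%:R x).
Definition tdist (l : nat) (S S' : quat -> Prop) (n : nat) : Prop :=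
  dist_le l S S' n /\ forall m, (m < n)%N -> ~ dist_le l S S' m.

Definition endpoints (a b : rat) (l : nat) (R S S' : quat -> Prop) (n : nat) : Prop :=
  [/\ maxorder a b l S, maxorder a b l S', tdist l S S' n & seteq (loc l R) (setI S S')].

Definition eichler (a b : rat) (p N : nat) (R : quat -> Prop) : Prop :=
  qorder a b (zinvp p) R /\
  forall l, prime l -> l <> p ->
    if (l %| N)%N then exists S S', endpoints a b l R S S' (logn l N)
    else maxorder a b l (loc l R).

Definition conjS (a b : rat) (g gi : quat) (S : quat -> Prop) : quat -> Prop :=
  fun y => exists x, S x /\ y = qmul a b (qmul a b g x) gi.

Record quad := Quad { kre : rat; kim : rat }.   (* kre + kim * sqrt d *)
Definition kmul (d : int) (x y : quad) : quad :=
  Quad (kre x * kre y + d%:~R * kim x * kim y) (kre x * kim y + kim x * kre y).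
Definition kadd (x y : quad) : quad := Quad (kre x + kre y) (kim x + kim y).
Definition kscale (c : rat) (x : quad) : quad := Quad (c * kre x) (c * kim x).
Definition kzero : quad := Quad 0 0.
Definition kone : quad := Quad 1 0.
Definition knorm (d : int) (x : quad) : rat := kre x ^+ 2 - d%:~R * kim x ^+ 2.
Definition kinv (d : int) (x : quad) : quad :=
  Quad (kre x / knorm d x) (- kim x / knorm d x).
Definition kpow (d : int) (x : quad) (n : nat) : quad := iter n (kmul d x) kone.

Definition isZ (q : rat) : bool := denq q == 1.
(* x in O_d = Z[(d + sqrt d)/2] *)
Definition inOd (d : int) (x : quad) : Prop :=
  isZ (2%:R * kim x) /\ isZ (kre x - d%:~R * kim x).
Definition inO (d : int) (p : nat) (x : quad) : Prop :=
  exists n : nat, inOd d (kscale (p ^ n)%:R x).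
Definition inOloc (d : int) (l : nat) (x : quad) : Prop :=
  exists s : nat, [/\ (0 < s)%N, coprime s l & inOd d (kscale s%:R x)].
(* x in the maximal order O_K (integral over Z) *)
Definition inOK (d : int) (x : quad) : Prop :=
  isZ (2%:R * kre x) /\ isZ (knorm d x).

Definition qalg_emb (a b : rat) (d : int) (psi : quad -> quat) : Prop :=
  [/\ forall x y, psi (kadd x y) = qadd (psi x) (psi y),
      forall x y, psi (kmul d x y) = qmul a b (psi x) (psi y),
      forall c : rat, psi (Quad c 0) = qscale c qone &
      injective psi].

Definition optimal (a b : rat) (d : int) (p : nat) (R : quat -> Prop)
    (psi : quad -> quat) : Prop :=
  qalg_emb a b d psi /\ forall x, R (psi x) <-> inO d p x.

(* distance from the vertex S to the geodesic G_psi; the vertices of G_psi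
   are the maximal Z_(l)-orders containing psi(O_K) *)
Definition onG (a b : rat) (d : int) (l : nat) (psi : quad -> quat)
    (V : quat -> Prop) : Prop :=
  maxorder a b l V /\ forall x, inOK d x -> V (psi x).
Definition distG (a b : rat) (d : int) (l : nat) (psi : quad -> quat)
    (S : quat -> Prop) (m : nat) : Prop :=
  (exists V, onG a b d l psi V /\ tdist l S V m) /\
  forall V m', onG a b d l psi V -> tdist l S V m' -> (m <= m')%N.

Definition rmorph_on (T : Type) (F : nzRingType) (P : T -> Prop)
    (add mul : T -> T -> T) (one : T) (f : T -> F) : Prop :=
  [/\ f one = 1,
      forall x y, P x -> P y -> f (add x y) = f x + f y &
      forall x y, P x -> P y -> f (mul x y) = f x * f y].

Definition setting (a b : rat) (p : nat) (Nm Np : nat) (R : quat -> Prop)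
    (d : int) (F : nat -> finFieldType) (nu : forall l, quat -> F l)
    (muF : forall l, quad -> F l) (S : nat -> quat -> Prop)
    (mu : nat -> quad -> int) : Prop :=
  [/\
      a != 0 /\ b != 0, prime p /\ ~ ramified a b p,
      (0 < Nm)%N /\ (forall l, prime l -> ((l %| Nm)%N <-> ramified a b l))
        /\ (forall l, prime l -> ~~ (l ^ 2 %| Nm)%N),
      (0 < Np)%N /\ coprime Np (Nm * p) /\ eichler a b p Np R &
    [/\ (* K = Q(sqrt d) a quadratic field, O_d an order *)
        (forall r : rat, r ^+ 2 != d%:~R) /\ ((d %% 4)%Z == 0 \/ (d %% 4)%Z == 1),
        ~~ ((p ^ 2)%N%:Z %| d)%Z /\ coprimez d Nm%:Z /\
          (forall l, prime l -> (l ^ 2 %| Np)%N -> ~~ (l%:Z %| d)%Z),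
        (forall l, prime l -> (l %| Nm)%N ->
           [/\ #|F l| = (l ^ 2)%N,
               rmorph_on quat (F l) (loc l R) qadd (qmul a b) qone (nu l) &
               rmorph_on quad (F l) (inOloc d l) kadd (kmul d) kone (muF l)]),
        (forall l, prime l -> (l %| Np)%N ->
           exists S', endpoints a b l R (S l) S' (logn l Np)) &
        (* orientation data at l | N^+, l not | d : an isomorphism
           K_l^x / O_l^x Q_l^x -> Z, given through K^x (dense in K_l^x) *)
        (forall l, prime l -> (l %| Np)%N -> ~~ (l%:Z %| d)%Z ->
           [/\ forall x y, x <> kzero -> y <> kzero ->
                 mu l (kmul d x y) = mu l x + mu l y,
               forall z : int, exists x, x <> kzero /\ mu l x = z &
               forall x, x <> kzero ->
                 (mu l x = 0 <-> exists m : int,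
                    inOloc d l (kscale ((l%:R : rat) ^ m) x) /\
                    inOloc d l (kinv d (kscale ((l%:R : rat) ^ m) x)))])]].

Definition oriented_opt (a b : rat) (p : nat) (Nm Np : nat) (R : quat -> Prop)
    (d : int) (F : nat -> finFieldType) (nu : forall l, quat -> F l)
    (muF : forall l, quad -> F l) (S : nat -> quat -> Prop)
    (mu : nat -> quad -> int) (psi : quad -> quat) : Prop :=
  [/\ optimal a b d p R psi,
      (forall l, prime l -> (l %| Nm)%N ->
         forall x, inOloc d l x -> nu l (psi x) = muF l x),
      (forall l, prime l -> (l %| Np)%N -> ~~ (l%:Z %| d)%Z ->
         exists t, [/\ t <> kzero, mu l t = 1 &
           endpoints a b l R (S l)
             (conjS a b (psi (kpow d t (logn l Np)))
                        (psi (kpow d (kinv d t) (logn l Np))) (S l))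
             (logn l Np)]) &
      (forall l, prime l -> (l %| Np)%N -> (l%:Z %| d)%Z ->
         exists S' m m', [/\ endpoints a b l R (S l) S' (logn l Np),
           distG a b d l psi (S l) m, distG a b d l psi S' m' & (m' < m)%N])].

(** Conjugation by a unit [x] of [R] is an automorphism of [B]; it fixes every
    multiplicatively closed set containing [x] and [x^-1] (so [R], [R_l] and
    the maximal orders containing [R_l]) and transports lattices, orders,
    maximal orders, tree distances and the geodesic of an embedding.  Hence
    [x psi x^-1] is again optimal; the reductions [nu_l] do not see the
    conjugation because their target is commutative; and at [l | N^+] both
    endpoints of [eta_{R_l}] contain [R_l], hence are fixed, so each
    orientation condition on [psi] transfers to [x psi x^-1]. *)
From Pilot Require Import Defs.
From mathcomp Require Import all_boot all_order all_algebra ring.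
From Stdlib Require Import FunctionalExtensionality PropExtensionality.
Import GRing.Theory.
Local Open Scope ring_scope.

Ltac quat_ring := rewrite /qmul /qadd /qscale /qone /qzero /=; congr Quat; ring.

Definition qmul_closed (a b : rat) (T : quat -> Prop) : Prop :=
  forall u v, T u -> T v -> T (qmul a b u v).

Definition qinverse (a b : rat) (x y : quat) : Prop :=
  qmul a b x y = qone /\ qmul a b y x = qone.

Definition inner (a b : rat) (x y z : quat) : quat := qmul a b (qmul a b x z) y.

(* The preimage under [inner a b y x]; for [y = x^-1] this is the set [x V x^-1]. *)
Definition inner_set (a b : rat) (x y : quat) (V : quat -> Prop) : quat -> Prop :=
  fun z => V (inner a b y x z).

Section Conjugation.
Context {a b : rat}.
Implicit Types (x y z u v w : quat) (A : rat -> Prop) (T V W : quat -> Prop).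

Lemma qmulA u v w : qmul a b (qmul a b u v) w = qmul a b u (qmul a b v w).
Proof. move: u v w => [? ? ? ?] [? ? ? ?] [? ? ? ?]; quat_ring. Qed.

Lemma qmul1r u : qmul a b qone u = u.
Proof. move: u => [? ? ? ?]; quat_ring. Qed.

Lemma qmulr1 u : qmul a b u qone = u.
Proof. move: u => [? ? ? ?]; quat_ring. Qed.

Lemma qmul0r u : qmul a b qzero u = qzero.
Proof. move: u => [? ? ? ?]; quat_ring. Qed.

Lemma qmulr0 u : qmul a b u qzero = qzero.
Proof. move: u => [? ? ? ?]; quat_ring. Qed.

Lemma qmulDl u v w : qmul a b (qadd u v) w = qadd (qmul a b u w) (qmul a b v w).
Proof. move: u v w => [? ? ? ?] [? ? ? ?] [? ? ? ?]; quat_ring. Qed.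

Lemma qmulDr u v w : qmul a b w (qadd u v) = qadd (qmul a b w u) (qmul a b w v).
Proof. move: u v w => [? ? ? ?] [? ? ? ?] [? ? ? ?]; quat_ring. Qed.

Lemma qmulZl c u v : qmul a b (qscale c u) v = qscale c (qmul a b u v).
Proof. move: u v => [? ? ? ?] [? ? ? ?]; quat_ring. Qed.

Lemma qmulZr c u v : qmul a b u (qscale c v) = qscale c (qmul a b u v).
Proof. move: u v => [? ? ? ?] [? ? ? ?]; quat_ring. Qed.

Lemma qscaleA c c' u : qscale c (qscale c' u) = qscale (c * c') u.
Proof. move: u => [? ? ? ?]; quat_ring. Qed.

Lemma qscale1 u : qscale 1 u = u.
Proof. move: u => [? ? ? ?]; quat_ring. Qed.

Lemma kscale1 k : kscale 1 k = k.
Proof. by case: k => ? ?; rewrite /kscale !mul1r. Qed.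

Lemma qorder_qmul_closed A T : qorder a b A T -> qmul_closed a b T.
Proof. by case=> _ []. Qed.

Lemma maxorder_qmul_closed l T : maxorder a b l T -> qmul_closed a b T.
Proof. by case=> /qorder_qmul_closed. Qed.

Lemma eichler_qmul_closed p N R : eichler a b p N R -> qmul_closed a b R.
Proof. by case=> /qorder_qmul_closed. Qed.

Lemma qinverse_sym {x y} : qinverse a b x y -> qinverse a b y x.
Proof. by case. Qed.

Section InnerAutomorphism.
Variables x y : quat.

Lemma innerD : {morph inner a b x y : u v / qadd u v}.
Proof. by move=> u v; rewrite /inner qmulDr qmulDl. Qed.

Lemma innerZ c : {morph inner a b x y : u / qscale c u}.
Proof. by move=> u; rewrite /inner qmulZr qmulZl. Qed.

Lemma inner0 : inner a b x y qzero = qzero.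
Proof. by rewrite /inner qmulr0 qmul0r. Qed.

Lemma inner_qlin c0 c1 c2 c3 e0 e1 e2 e3 :
  inner a b x y (qlin c0 c1 c2 c3 e0 e1 e2 e3) =
  qlin c0 c1 c2 c3
    (inner a b x y e0) (inner a b x y e1) (inner a b x y e2) (inner a b x y e3).
Proof. by rewrite /qlin !innerD !innerZ. Qed.

Hypothesis hxy : qinverse a b x y.

Lemma inner1 : inner a b x y qone = qone.
Proof. by rewrite /inner qmulr1 hxy.1. Qed.

Lemma innerM : {morph inner a b x y : u v / qmul a b u v}.
Proof.
move=> u v; rewrite /inner !qmulA; congr (qmul a b x _).
by rewrite -[in RHS](qmulA y) hxy.2 qmul1r.
Qed.

Lemma innerK : cancel (inner a b x y) (inner a b y x).
Proof. by move=> u; rewrite /inner !qmulA hxy.2 qmulr1 -!qmulA hxy.2 qmul1r. Qed.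

Lemma inner_setK V : inner_set a b y x (inner_set a b x y V) = V.
Proof. by apply: functional_extensionality => z; rewrite /inner_set innerK. Qed.

End InnerAutomorphism.
Arguments inner1 {x y}.
Arguments innerM {x y}.
Arguments innerK {x y}.
Arguments inner_setK {x y}.

Lemma mem_inner_closed {x y T u} : qinverse a b x y ->
  qmul_closed a b T -> T x -> T y -> T (inner a b x y u) <-> T u.
Proof.
move=> hxy M Tx Ty; split=> Tu; last exact: M (M _ _ Tx Tu) Ty.
by rewrite -[u](innerK hxy); apply: M (M _ _ Ty Tu) Tx.
Qed.

Lemma inner_set_id {x y T} : qinverse a b x y -> qmul_closed a b T -> T x -> T y ->
  inner_set a b x y T = T.
Proof.
move=> hxy M Tx Ty; apply: functional_extensionality => z.
apply: propositional_extensionality; exact: mem_inner_closed (qinverse_sym hxy) M Ty Tx.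
Qed.

Lemma qorder_inner {A x y V} :
  qinverse a b x y -> qorder a b A V -> qorder a b A (inner_set a b x y V).
Proof.
move=> hxy [[e0 [e1 [e2 [e3 [e_indep memV]]]]] [V1 VM]]; split; last split.
- exists (inner a b x y e0), (inner a b x y e1), (inner a b x y e2), (inner a b x y e3).
  split.
  + move=> c0 c1 c2 c3; rewrite -inner_qlin => /(f_equal (inner a b y x)).
    by rewrite (innerK hxy) inner0; apply: e_indep.
  + move=> z; rewrite /inner_set memV; split.
    * move=> [c0 [c1 [c2 [c3 [Ac E]]]]]; exists c0, c1, c2, c3; split => //.
      by rewrite -inner_qlin -E (innerK (qinverse_sym hxy)).
    * move=> [c0 [c1 [c2 [c3 [Ac ->]]]]]; exists c0, c1, c2, c3; split => //.
      by rewrite inner_qlin !(innerK hxy).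
- by rewrite /inner_set (inner1 (qinverse_sym hxy)).
- by move=> u v Vu Vv; rewrite /inner_set (innerM (qinverse_sym hxy)); apply: VM.
Qed.

Lemma maxorder_inner {l x y V} :
  qinverse a b x y -> maxorder a b l V -> maxorder a b l (inner_set a b x y V).
Proof.
move=> hxy [ordV maxV]; split; first exact: qorder_inner.
move=> S' ordS' subS' z.
have hyx := qinverse_sym hxy.
have sub : Defs.subset V (inner_set a b y x S').
  by move=> w Vw; apply: subS'; rewrite /inner_set (innerK hxy).
have E := maxV _ (qorder_inner hyx ordS') sub (inner a b y x z).
by rewrite /inner_set (innerK hyx) in E.
Qed.

Lemma dist_le_inner l x y T V m :
  dist_le l T V m -> dist_le l (inner_set a b x y T) (inner_set a b x y V) m.
Proof. by move=> le_m z Tz; rewrite /inner_set innerZ; apply: le_m. Qed.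

Lemma tdist_inner {l x y T V m} :
  qinverse a b x y -> tdist l T V m ->
  tdist l (inner_set a b x y T) (inner_set a b x y V) m.
Proof.
move=> hxy [le_m min_m]; split; first exact: dist_le_inner.
move=> m' lt_m' /(dist_le_inner _ y x).
by rewrite !(inner_setK hxy); apply: min_m.
Qed.

Lemma onG_inner {d l x y psi V} :
  qinverse a b x y -> onG a b d l psi V ->
  onG a b d l (fun k => inner a b x y (psi k)) (inner_set a b x y V).
Proof.
move=> hxy [maxV psiV]; split; first exact: maxorder_inner.
by move=> k Ok; rewrite /inner_set (innerK hxy); apply: psiV.
Qed.

Lemma distG_inner {d l x y psi T m} :
  qinverse a b x y -> distG a b d l psi T m ->
  distG a b d l (fun k => inner a b x y (psi k)) (inner_set a b x y T) m.
Proof.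
move=> hxy [[V [onV distV]] min_m]; split.
  by exists (inner_set a b x y V); split; [apply: onG_inner | apply: tdist_inner].
move=> W m' onW distW; have hyx := qinverse_sym hxy.
apply: (min_m (inner_set a b y x W)).
- have := onG_inner hyx onW.
  congr (onG _ _ _ _ _ _); apply: functional_extensionality => k.
  exact: innerK.
- by have := tdist_inner hyx distW; rewrite inner_setK.
Qed.

Lemma conjS_inner {x y P Q T} : qinverse a b x y -> inner_set a b x y T = T ->
  conjS a b (inner a b x y P) (inner a b x y Q) T = inner_set a b x y (conjS a b P Q T).
Proof.
move=> hxy T_inv; have hyx := qinverse_sym hxy.
have mem_inner w : T (inner a b x y w) <-> T w.
  by rewrite -[in X in X <-> _]T_inv /inner_set (innerK hxy).
apply: functional_extensionality => z; apply: propositional_extensionality.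
rewrite /inner_set; split.
- move=> [w [Tw ->]]; exists (inner a b y x w); split; first by rewrite -T_inv in Tw.
  by rewrite -[w in LHS](innerK hyx) -!(innerM hxy) (innerK hxy).
- move=> [w [Tw E]]; exists (inner a b x y w); split; first exact/mem_inner.
  by rewrite -(innerK hyx z) E !(innerM hxy).
Qed.

Lemma rmorph_inner {F : comNzRingType} {P : quat -> Prop} {f : quat -> F} {x y u} :
  rmorph_on quat F P qadd (qmul a b) qone f -> qmul_closed a b P -> qinverse a b x y ->
  P x -> P y -> P u -> f (inner a b x y u) = f u.
Proof.
move=> [f1 _ fM] M hxy Px Py Pu.
rewrite /inner fM ?fM //; last exact: M.
by rewrite mulrAC -fM // hxy.1 f1 mul1r.
Qed.

Lemma mem_loc l {R z} : R z -> loc l R z.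
Proof. by move=> Rz; exists 1%N; rewrite coprime1n qscale1. Qed.

Lemma loc_qmul_closed {l R} : qmul_closed a b R -> qmul_closed a b (loc l R).
Proof.
move=> M u v [s [s0 cs Rsu]] [t [t0 ct Rtv]]; exists (s * t)%N.
rewrite muln_gt0 s0 t0 coprimeMl cs ct natrM -qscaleA -qmulZr -qmulZl.
by split=> //; apply: M.
Qed.

Lemma qalg_embZ {d psi} :
  qalg_emb a b d psi -> forall c k, psi (kscale c k) = qscale c (psi k).
Proof.
move=> [_ psiM psiC _] c k.
have -> : kscale c k = kmul d (Quad c 0) k.
  by case: k => ? ?; rewrite /kscale /kmul /=; congr Quad; ring.
by rewrite psiM psiC qmulZl qmul1r.
Qed.

Lemma optimal_loc {d p l R psi k} :
  optimal a b d p R psi -> inOloc d l k -> loc l R (psi k).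
Proof.
move=> [emb memR] [s [s0 cs Osk]]; exists s; split => //.
rewrite -(qalg_embZ emb); apply/memR; exists 0%N.
by rewrite expn0 kscale1.
Qed.

Lemma qalg_emb_inner d x y psi :
  qinverse a b x y -> qalg_emb a b d psi ->
  qalg_emb a b d (fun k => inner a b x y (psi k)).
Proof.
move=> hxy [psiD psiM psiC psi_inj]; split.
- by move=> u v; rewrite psiD innerD.
- by move=> u v; rewrite psiM (innerM hxy).
- by move=> c; rewrite psiC innerZ (inner1 hxy).
- exact: inj_comp (can_inj (innerK hxy)) psi_inj.
Qed.

Lemma optimal_inner d p R x y psi :
  qinverse a b x y -> qmul_closed a b R -> R x -> R y ->
  optimal a b d p R psi -> optimal a b d p R (fun k => inner a b x y (psi k)).
Proof.
move=> hxy M Rx Ry [emb memR]; split; first exact: qalg_emb_inner.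
by move=> k; rewrite mem_inner_closed.
Qed.

Lemma endpoints_inner_set_id {l R S1 S2 n x y} :
  qinverse a b x y -> R x -> R y -> endpoints a b l R S1 S2 n ->
  inner_set a b x y S1 = S1 /\ inner_set a b x y S2 = S2.
Proof.
move=> hxy Rx Ry [max1 max2 _ locR].
have [S1x S2x] := (locR x).1 (mem_loc l Rx).
have [S1y S2y] := (locR y).1 (mem_loc l Ry).
by split; apply: inner_set_id => //; [apply: maxorder_qmul_closed max1 |
  apply: maxorder_qmul_closed max2].
Qed.

End Conjugation.

Theorem lemma4p3 (a b : rat) (p Nm Np : nat) (R : quat -> Prop) (d : int)
    (F : nat -> finFieldType) (nu : forall l, quat -> F l)
    (muF : forall l, quad -> F l) (S : nat -> quat -> Prop)
    (mu : nat -> quad -> int) (psi : quad -> quat) (x y : quat) :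
  setting a b p Nm Np R d F nu muF S mu ->
  oriented_opt a b p Nm Np R d F nu muF S mu psi ->
  R x -> R y -> qmul a b x y = qone -> qmul a b y x = qone ->
  oriented_opt a b p Nm Np R d F nu muF S mu
    (fun k => qmul a b (qmul a b x (psi k)) y).
Proof.
move=> [_ _ _ [_ [_ /eichler_qmul_closed RM]] [_ _ nu_data _ _]].
move=> [opt_psi nu_psi orient_split orient_ram] Rx Ry xy yx.
have hxy : qinverse a b x y by [].
split.
- exact: optimal_inner.
- move=> l Pl Dl k Ok; have [_ nuR _] := nu_data l Pl Dl.
  have nu_inner :=
    rmorph_inner nuR (loc_qmul_closed RM) hxy (mem_loc l Rx) (mem_loc l Ry).
  by rewrite nu_inner ?nu_psi //; apply: optimal_loc opt_psi Ok.
- move=> l Pl Dl nd; have [t [t0 mt ends]] := orient_split l Pl Dl nd.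
  have [S_fixed S'_fixed] := endpoints_inner_set_id hxy Rx Ry ends.
  by exists t; rewrite conjS_inner // S'_fixed.
- move=> l Pl Dl dd; have [S' [m [m' [ends distS distS' lt_m]]]] := orient_ram l Pl Dl dd.
  have [S_fixed S'_fixed] := endpoints_inner_set_id hxy Rx Ry ends.
  exists S', m, m'; split => //; [rewrite -S_fixed | rewrite -S'_fixed];
    exact: distG_inner.
Qed.
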